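(* Let $G$ be a group with identity $e$, $A$ a finite set with $|A|\ge2$, $S\subseteq G$ finite with $e\in S$. Let $\mathcal P\subseteq A^S$, and let $f:\mathcal P\to A$ and $g:\mathcal P^c\to A$ be well-behaved functions such that $(\mathcal P,f)$ generates a local map $\mu:A^S\to A$ and $(\mathcal P^c,g)$ generates a local map $\mu':A^S\to A$. (1) An element $s\in S\setminus\{e\}$ is essential for $\mu$ if and only if it is essential for $\mu'$. (2) If $A=\{0,1\}$, then $\mathrm{mms}(\mu)=\mathrm{mms}(\mu')$.
   Context: $A^S$ is the set of functions $S\to A$; $\mathcal P^c=A^S\setminus\mathcal P$. For $s\in S$, $\mathrm{Res}_s(z)=z|_{S\setminus\{s\}}$. An element $s\in S$ is essential for $\mu$ if there exist $z,w\in A^S$ with $\mathrm{Res}_s(z)=\mathrm{Res}_s(w)$ but $\mu(z)\neq\mu(w)$. A pair $(\mathcal Q,h)$ generates $\mu$ if $\mathcal Q=\{z\in A^S:\mu(z)\neq z(e)\}$ and $h:\mathcal Q\to A$ is the restriction of $\mu$ to $\mathcal Q$. A function $h:\mathcal Q\to A$ is well-behaved if for all $p,q\in\mathcal Q$: $p(e)=q(e)$ iff $h(p)=h(q)$. A local map $\nu:A^S\to A$ defines the cellular automaton $\tau:A^G\to A^G$, $\tau(x)(g)=\nu((g^{-1}\cdot x)|_S)$, where $(g\cdot x)(h)=x(g^{-1}h)$; a finite $T\subseteq G$ is a memory set of $\tau$ if some local map $A^T\to A$ defines $\tau$; $\mathrm{mms}(\nu)$ is the intersection of all memory sets of the cellular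 automaton defined by $\nu$, and it equals the set of elements of $S$ essential for $\nu$. *)

From mathcomp Require Import all_boot.
From Stdlib Require List.

Set Implicit Arguments.
Unset Strict Implicit.
Unset Printing Implicit Defensive.

Record group_str (G : Type) := GroupStr {
  gmul : G -> G -> G;
  ginv : G -> G;
  gone : G;
  gmulA : forall x y z, gmul x (gmul y z) = gmul (gmul x y) z;
  gmul1g : forall x, gmul gone x = x;
  gmulVg : forall x, gmul (ginv x) x = gone }.

Definition finite_subset (G : Type) (T : G -> Prop) : Prop :=
  exists l : list G, forall x, T x <-> List.In x l.

(* A^S : functions S -> A, S seen as the subtype {x | S x}. *)
Definition cfg (G : Type) (S : G -> Prop) (A : Type) := {x : G | S x} -> A.

Definition Res (G : Type) (S : G -> Prop) (A : Type) (s : G) (z : cfg S A)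
  : {x : G | S x /\ x <> s} -> A :=
  fun t => z (exist _ (proj1_sig t) (proj1 (proj2_sig t))).

Definition essential (G : Type) (S : G -> Prop) (A : Type)
  (mu : cfg S A -> A) (s : G) : Prop :=
  exists z w : cfg S A, @Res G S A s z = @Res G S A s w /\ mu z <> mu w.

(* (Q, h) generates mu; eS is the identity element e seen in S. *)
Definition generates (G : Type) (S : G -> Prop) (A : Type) (eS : {x : G | S x})
  (Q : cfg S A -> Prop) (h : {z : cfg S A | Q z} -> A) (mu : cfg S A -> A) : Prop :=
  (forall z, Q z <-> mu z <> z eS) /\ (forall p : {z | Q z}, h p = mu (proj1_sig p)).

Definition well_behaved (G : Type) (S : G -> Prop) (A : Type) (eS : {x : G | S x})
  (Q : cfg S A -> Prop) (h : {z : cfg S A | Q z} -> A) : Prop :=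
  forall p q : {z | Q z}, proj1_sig p eS = proj1_sig q eS <-> h p = h q.

Definition act (G : Type) (Gs : group_str G) (A : Type) (g : G) (x : G -> A) : G -> A :=
  fun h => x (gmul Gs (ginv Gs g) h).

Definition ca_of (G : Type) (Gs : group_str G) (S : G -> Prop) (A : Type)
  (nu : cfg S A -> A) : (G -> A) -> (G -> A) :=
  fun x g => nu (fun s => act Gs (ginv Gs g) x (proj1_sig s)).

Definition memory_set (G : Type) (Gs : group_str G) (A : Type)
  (tau : (G -> A) -> (G -> A)) (T : G -> Prop) : Prop :=
  finite_subset T /\ exists nu' : cfg T A -> A, forall x, tau x = ca_of Gs nu' x.

Definition mms (G : Type) (Gs : group_str G) (S : G -> Prop) (A : Type)
  (nu : cfg S A -> A) : G -> Prop :=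
  fun h => forall T : G -> Prop, memory_set Gs (ca_of Gs nu) T -> T h.

From mathcomp Require Import all_boot.
From Stdlib Require Import Classical FunctionalExtensionality.

Set Implicit Arguments.
Unset Strict Implicit.
Unset Printing Implicit Defensive.

(* If (Q, h) generates mu and h is well-behaved, then on configurations z, w
   agreeing at e we have mu z = mu w iff z and w lie both inside or both
   outside Q: inside Q by well-behavedness, outside Q because mu returns the
   value at e, and across the boundary exactly one of mu z, mu w equals the
   common value at e. This criterion is unchanged when P is replaced by its
   complement, so mu and mu' identify the same such pairs; the witnesses of
   essentiality of s <> e agree at e, which gives (1). Over a two-letter
   alphabet mu z <> mu' z for all z, so each map is the other followed by the
   letter swap, and post-composition preserves memory sets, which gives (2). *)

Section Generators.

Variables (G : Type) (S : G -> Prop) (A : Type) (eS : {x : G | S x}).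

Lemma generates_fix_iff (Q : cfg S A -> Prop) (h : {z | Q z} -> A)
    (mu : cfg S A -> A) :
  generates eS h mu -> forall z, mu z = z eS <-> ~ Q z.
Proof.
move=> [genQ _] z; split=> [fix_z /genQ //|notQ].
by apply: NNPP => /genQ.
Qed.

Lemma generates_eq_iff (Q : cfg S A -> Prop) (h : {z | Q z} -> A)
    (mu : cfg S A -> A) :
  well_behaved eS h -> generates eS h mu ->
  forall z w, z eS = w eS -> (mu z = mu w <-> (Q z <-> Q w)).
Proof.
move=> wb gen z w ezw; have fixE := generates_fix_iff gen.
have [genQ genh] := gen.
have nfixQ x : Q x -> mu x <> x eS by case: (genQ x).
case: (classic (Q z)) => Qz; case: (classic (Q w)) => Qw.
- split=> // _; rewrite -(genh (exist _ z Qz)) -(genh (exist _ w Qw)).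
  exact/(wb (exist _ z Qz) (exist _ w Qw)).
- have /fixE fix_w := Qw.
  have neq_zw : mu z <> mu w by rewrite fix_w -ezw; exact: nfixQ.
  by split=> [/neq_zw|[/(_ Qz)/Qw]].
- have /fixE fix_z := Qz.
  have neq_zw : mu z <> mu w by rewrite fix_z ezw; apply: nesym; exact: nfixQ.
  by split=> [/neq_zw|[_ /(_ Qw)/Qz]].
- by split=> // _; rewrite (proj2 (fixE z) Qz) (proj2 (fixE w) Qw).
Qed.

Lemma generates_compl_eq_iff (P : cfg S A -> Prop) (f : {z | P z} -> A)
    (g : {z | ~ P z} -> A) (mu mu' : cfg S A -> A) :
  well_behaved eS f -> well_behaved eS g ->
  generates eS f mu -> generates eS g mu' ->
  forall z w, z eS = w eS -> (mu z = mu w <-> mu' z = mu' w).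
Proof.
move=> wf wg gf gg z w ezw.
rewrite (generates_eq_iff wf gf ezw) (generates_eq_iff wg gg ezw).
split=> [|PzPw]; first tauto.
by split=> ?; apply: NNPP; tauto.
Qed.

Lemma compl_generates_neq (P : cfg S A -> Prop) (f : {z | P z} -> A)
    (g : {z | ~ P z} -> A) (mu mu' : cfg S A -> A) :
  generates eS f mu -> generates eS g mu' -> forall z, mu z <> mu' z.
Proof.
move=> gf gg z muE.
have := generates_fix_iff gf z; have := generates_fix_iff gg z.
rewrite muE; tauto.
Qed.

Lemma Res_eq_at (s t : G) (St : S t) (z w : cfg S A) :
  t <> s -> Res (s:=s) z = Res (s:=s) w -> z (exist S t St) = w (exist S t St).
Proof.
move=> ts /(congr1 (fun k => k (exist _ t (conj St ts)))).
by rewrite /Res /= (proof_irrelevance _ (proj1 _) St).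
Qed.

Lemma essential_iff_of_eq_iff (mu mu' : cfg S A -> A) (s : G) :
  proj1_sig eS <> s ->
  (forall z w, z eS = w eS -> (mu z = mu w <-> mu' z = mu' w)) ->
  essential mu s <-> essential mu' s.
Proof.
case: eS => e Se /= es sameEq.
suff ess_sub (nu nu' : cfg S A -> A) :
    (forall z w, z (exist S e Se) = w (exist S e Se) -> nu' z = nu' w -> nu z = nu w) ->
    essential nu s -> essential nu' s.
  by split; apply: ess_sub => z w /sameEq [].
move=> eqE [z [w [Resz nuz]]]; exists z, w; split=> // nu'z.
exact/nuz/eqE/nu'z/Res_eq_at/Resz.
Qed.

End Generators.

Definition other {A : finType} (a : A) : A := odflt a [pick b | b != a].

Lemma otherE (A : finType) (a b : A) : #|A| = 2 -> b != a -> other a = b.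
Proof.
move=> A2 ba; rewrite /other; case: pickP => [c ca | /(_ b)]; last by rewrite ba.
have /card_le1_eqP : #|predC1 a| <= 1 by rewrite cardC1 A2.
by apply.
Qed.

Lemma ca_of_comp_memory_set (G : Type) (Gs : group_str G) (S : G -> Prop)
    (A : Type) (nu : cfg S A -> A) (F : A -> A) (T : G -> Prop) :
  memory_set Gs (ca_of Gs nu) T -> memory_set Gs (ca_of Gs (F \o nu)) T.
Proof.
move=> [finT [nuT caE]]; split=> //; exists (F \o nuT) => x.
apply: functional_extensionality => g.
by move: (caE x) => /(congr1 (fun k => F (k g))).
Qed.

Lemma mms_comp_subset (G : Type) (Gs : group_str G) (S : G -> Prop)
    (A : Type) (nu : cfg S A -> A) (F : A -> A) (h : G) :
  mms Gs (F \o nu) h -> mms Gs nu h.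
Proof. by move=> mmsh T /(ca_of_comp_memory_set F); apply: mmsh. Qed.

Theorem mainTheorem7 (G : Type) (Gs : group_str G) (A : finType)
  (S : G -> Prop) (hA : 1 < #|A|) (hS : finite_subset S) (he : S (gone Gs))
  (P : cfg S A -> Prop) (f : {z : cfg S A | P z} -> A)
  (g : {z : cfg S A | ~ P z} -> A) (mu mu' : cfg S A -> A) :
  well_behaved (exist S (gone Gs) he) f ->
  well_behaved (exist S (gone Gs) he) g ->
  generates (exist S (gone Gs) he) f mu ->
  generates (exist S (gone Gs) he) g mu' ->
  (forall s : G, S s -> s <> gone Gs -> (essential mu s <-> essential mu' s)) /\
  (#|A| = 2 -> forall h : G, mms Gs mu h <-> mms Gs mu' h).
Proof.
move=> wf wg gf gg; split=> [s _ se | A2 h].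
  apply: essential_iff_of_eq_iff (generates_compl_eq_iff wf wg gf gg).
  exact: nesym.
have neq := compl_generates_neq gf gg.
have mu_other : mu = other \o mu'.
  apply: functional_extensionality => z; symmetry; apply: otherE A2 _.
  exact/eqP.
have mu'_other : mu' = other \o mu.
  apply: functional_extensionality => z; symmetry; apply: otherE A2 _.
  exact/eqP/nesym.
by split; [rewrite mu_other | rewrite mu'_other]; apply: mms_comp_subset.
Qed.
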